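(* Let $X$ be a tropical hypersurface in $\mathbb{R}^n$, $n>3$, with dual subdivision $S_X$ of its Newton polytope $\Delta$. Let $\delta_1,\dots,\delta_k$ be all the $n$-dimensional polytopes of $S_X$ other than simplices, ordered in any way. Then $$rk(X)\le\#Vert(S_X)-1-\sum_{i=1}^{k}\Big(\#\Big(Vert(\delta_i)\setminus\bigcup_{j<i}Vert(\delta_j)\Big)-n+\dim\mathrm{ConvHull}\Big(Vert(\delta_i)\cap\bigcup_{j<i}Vert(\delta_j)\Big)\Big),$$ with the convention that the convex hull of the empty set has dimension $-1$.
   Context: A tropical hypersurface $X\subset\mathbb{R}^n$ is the corner locus of a tropical polynomial $N(x)=\max_{\omega\in\Delta\cap\mathbb{Z}^n}(\langle\omega,x\rangle+c_\omega)$, where $\Delta$ is its Newton polytope; $S_X$ is the dual subdivision (the regular subdivision of $\Delta$ induced by $\omega\mapsto c_\omega$), $Vert(S_X)$ its vertex set and $Vert(\delta)$ the vertex set of a cell $\delta$. The rank $rk(X)$ is the dimension of the space of tropical hypersurfaces with the same dual subdivision, i.e. of the set of vectors $(c_\omega)_{\omega\in Vert(S_X)}$, modulo adding a common constant, inducing exactly $S_X$. *)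

From HB Require Import structures.
From Stdlib Require Import ClassicalEpsilon.
From mathcomp Require Import all_boot all_order all_algebra.
Set Implicit Arguments. Unset Strict Implicit. Unset Printing Implicit Defensive.
Import Order.TTheory GRing.Theory Num.Theory.
Local Open Scope ring_scope.

Definition pbool (P : Prop) : bool :=
  if excluded_middle_informative P then true else false.

Section Tropical.
Variables (R : realFieldType) (n N : nat).
(* A tropical polynomial with N monomials: exponents pts i in Z^n and
   coefficients c i in R. *)
Variable pts : 'I_N -> 'rV[int]_n.

Definition toR (w : 'rV[int]_n) : 'rV[R]_n := map_mx (fun z : int => z%:~R) w.

Definition monval (c : 'I_N -> R) (i : 'I_N) (x : 'rV[R]_n) : R :=
  (toR (pts i) *m x^T) 0 0 + c i.

Definition argmaxset (P : {set 'I_N}) (c : 'I_N -> R) (x : 'rV[R]_n)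
  : {set 'I_N} :=
  [set i in P | [forall j in P, monval c j x <= monval c i x]].

Definition in_conv (T : {set 'I_N}) (p : 'rV[R]_n) : Prop :=
  exists lam : 'I_N -> R,
    (forall j, 0 <= lam j) /\ (forall j, j \notin T -> lam j = 0) /\
    \sum_j lam j = 1 /\ \sum_j lam j *: toR (pts j) = p.

Definition is_vtx (S : {set 'I_N}) (i : 'I_N) : Prop :=
  i \in S /\ ~ in_conv (S :\ i) (toR (pts i)).

Definition vtxset (S : {set 'I_N}) : {set 'I_N} :=
  [set i in S | pbool (is_vtx S i)].

(* cells of the regular subdivision of ConvHull(pts P) induced by the
   lifting i |-> c i : the convex hulls of the argmax sets *)
Definition cellsupp (P : {set 'I_N}) (c : 'I_N -> R) : {set {set 'I_N}} :=
  [set S : {set 'I_N} | pbool (exists x : 'rV[R]_n, argmaxset P c x = S)].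

(* the subdivision, each polytope being represented by its vertex set *)
Definition subdiv (P : {set 'I_N}) (c : 'I_N -> R) : {set {set 'I_N}} :=
  [set vtxset S | S in cellsupp P c].

Definition vertS (c : 'I_N -> R) : {set 'I_N} :=
  \bigcup_(D in subdiv setT c) D.

Definition dimconv (T : {set 'I_N}) : int :=
  match [pick i in T] with
  | Some i0 => (\rank (\matrix_(i < N, j < n)
                  (if i \in T then toR (pts i) 0 j - toR (pts i0) 0 j else 0)))%:Z
  | None => -1
  end.

Definition nonsimplex_cells (c : 'I_N -> R) : {set {set 'I_N}} :=
  [set D in subdiv setT c | (dimconv D == n%:Z) && (#|D| != n.+1)].

(* coefficient vectors on Vert(S_X) (extended by 0 elsewhere) inducing
   exactly the subdivision S_X *)
Definition same_subdiv (c : 'I_N -> R) (c' : 'rV[R]_N) : Prop :=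
  (forall i, i \notin vertS c -> c' 0 i = 0) /\
  subdiv (vertS c) (fun i => c' 0 i) = subdiv setT c.

(* indicator of Vert(S_X): the direction of adding a common constant *)
Definition constdir (c : 'I_N -> R) : 'rV[R]_N :=
  \row_i (if i \in vertS c then 1 else 0).

(* rk(X) >= d : there are d+1 points of the space of such coefficient
   vectors whose images in the quotient by constants are affinely
   independent *)
Definition rank_atleast (c : 'I_N -> R) (d : nat) : Prop :=
  exists cs : 'I_d.+1 -> 'rV[R]_N,
    (forall k, same_subdiv c (cs k)) /\
    \rank (col_mx (constdir c)
             (\matrix_(k < d, j < N) (cs (lift ord0 k) 0 j - cs ord0 0 j)))
      = d.+1.

Definition rhs_bound (c : 'I_N -> R) (s : seq {set 'I_N}) : int :=
  (#|vertS c|%:Z - 1 -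
   \sum_(i < size s)
     (#|nth set0 s i :\: \bigcup_(j < i) nth set0 s j|%:Z - n%:Z
      + dimconv (nth set0 s i :&: \bigcup_(j < i) nth set0 s j)))%R.

End Tropical.

From mathcomp Require Import all_boot all_order all_algebra.
From mathcomp Require Import ring zify.
From Stdlib Require Import ClassicalEpsilon.
Set Implicit Arguments. Unset Strict Implicit. Unset Printing Implicit Defensive.
Import Order.TTheory GRing.Theory Num.Theory.
Local Open Scope ring_scope.

(* Let W be the matrix whose rows are the indicator of Vert(S_X) and the
   differences of coefficient vectors inducing S_X, so that rank W = rk(X) + 1.
   On every cell D each row of W restricts to an affine function of the points
   of D, i.e. to a vector of the row space of the (n+1) x N matrix of
   homogenised points of D.  Adding the cells one at a time, D_i raises the
   rank of the restriction of W to the union by at most (n+1) minus the rank of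
   the affine functions on the overlap, i.e. by at most
   n - dim ConvHull(overlap); each vertex outside all the cells adds at most 1. *)

Lemma pboolP (P : Prop) : pbool P -> P.
Proof. by rewrite /pbool; case: excluded_middle_informative. Qed.

Section RestrictionRank.
Variables (R : realFieldType) (n N : nat) (pts : 'I_N -> 'rV[int]_n).

Definition restr_mx (S : {set 'I_N}) : 'M[R]_N :=
  diag_mx (\row_j (if j \in S then 1 else 0)).

Lemma mulmx_restr m (X : 'M[R]_(m, N)) S :
  X *m restr_mx S = \matrix_(i, j) (if j \in S then X i j else 0).
Proof.
rewrite mul_mx_diag; apply/matrixP=> i j; rewrite !mxE.
by case: ifP => _; rewrite ?mulr1 ?mulr0.
Qed.

Lemma mulmx_restr0 m (X : 'M[R]_(m, N)) : X *m restr_mx set0 = 0.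
Proof. by rewrite mulmx_restr; apply/matrixP=> i j; rewrite !mxE inE. Qed.

Lemma restr_mxM S T : restr_mx S *m restr_mx T = restr_mx (S :&: T).
Proof.
rewrite mulmx_restr; apply/matrixP=> i j; rewrite !mxE inE.
case: (eqVneq i j) => [<-|_]; rewrite ?mulr0n ?mulr1n; last by case: ifP.
by case: (i \in S); case: (i \in T).
Qed.

Lemma rank_restr_mx S : (\rank (restr_mx S) <= #|S|)%N.
Proof.
have -> : restr_mx S = \sum_(i in S) delta_mx i i.
  rewrite /restr_mx diag_mx_sum_delta [RHS]big_mkcond /=.
  by apply: eq_bigr => i _; rewrite mxE; case: ifP => _; rewrite ?scale1r ?scale0r.
rewrite -sum1_card; elim/big_rec2: _ => [|i r1 r2 _ IH]; first by rewrite mxrank0.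
by apply: leq_trans (mxrank_add _ _) _; rewrite mxrank_delta leq_add2l.
Qed.

(* Its row space consists of the restrictions to D of the affine functions on R^n. *)
Definition affine_mx (D : {set 'I_N}) : 'M[R]_((n + 1)%N, N) :=
  col_mx (\matrix_(k, j) (if j \in D then toR R (pts j) 0 k else 0))
         (\row_j (if j \in D then 1 else 0)).

Lemma affine_mx_restr D T : affine_mx D *m restr_mx T = affine_mx (D :&: T).
Proof.
rewrite /affine_mx mul_col_mx !mulmx_restr; congr col_mx; apply/matrixP => i j;
by rewrite !mxE inE; case: (j \in D); case: (j \in T).
Qed.

Lemma dimconv_lt_rank_affine T :
  (dimconv R pts T + 1 <= (\rank (affine_mx T))%:Z)%R.
Proof.
rewrite /dimconv; case: pickP => [i0 Ti0|_]; last by rewrite addNr.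
set Df := \matrix_(i < N, j < n) _; set A := Df^T.
pose b : 'rV[R]_N := \row_j (if j \in T then 1 else 0).
have rank_b : \rank b = 1%N.
  rewrite rank_rV; apply/eqP; rewrite eqb1; apply/eqP.
  by move/rowP/(_ i0)/eqP; rewrite !mxE Ti0 oner_eq0.
have b_notin_A : ~~ (b <= A)%MS.
  apply/negP; case/submxP => u /rowP /(_ i0) /eqP.
  by rewrite !mxE Ti0 big1 ?oner_eq0 // => k _; rewrite !mxE Ti0 subrr mulr0.
have rank_cap : \rank (A :&: b) = 0%N.
  apply/eqP; apply: contraR b_notin_A => cap_ne0.
  have le1 : (\rank (A :&: b) <= 1)%N.
    by rewrite -[X in (_ <= X)%N]rank_b mxrankS ?capmxSr.
  have : (A :&: b == b)%MS.
    by rewrite -(mxrank_leqif_eq (capmxSr A b)).2 rank_b eqn_leq le1 lt0n.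
  by case/andP => _ /submx_trans; apply; exact: capmxSl.
(* Translating by -pts i0 is an invertible row operation on affine_mx T. *)
have translate : col_mx A b =
    block_mx 1%:M (- (toR R (pts i0))^T) 0 1%:M *m affine_mx T.
  rewrite mul_block_col !mul1mx mul0mx add0r; congr col_mx.
  apply/matrixP=> k j; rewrite mulNmx !mxE big_ord1 !mxE.
  by case: ifP => _; rewrite ?mulr1 ?mulr0 ?subr0.
have := mxrank_sum_cap A b; rewrite rank_b rank_cap addn0 addsmxE mxrank_tr.
move=> rank_sum; rewrite -PoszD lez_nat -rank_sum translate.
exact: mxrankM_maxr.
Qed.

(* The rows of W vanishing on U restrict on D to affine functions vanishing
   on D :&: U; these form a space of dimension (n+1) - rank (affine_mx (D :&: U)). *)
Lemma rank_restr_setU m (W : 'M[R]_(m, N)) U D :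
  (W *m restr_mx D <= affine_mx D)%MS ->
  (\rank (W *m restr_mx (U :|: D)) + \rank (affine_mx (D :&: U)) <=
   \rank (W *m restr_mx U) + n.+1)%N.
Proof.
move=> WD.
set K := (W :&: kermx (restr_mx U))%MS.
have KU0 : K *m restr_mx U = 0 by apply/eqP; rewrite -sub_kermx capmxSr.
have KUD : K *m restr_mx (U :|: D) = K *m restr_mx D.
  apply/matrixP => i j; move/matrixP/(_ i j): KU0.
  rewrite !mulmx_restr !mxE inE; case: (j \in U) => //= ->; by case: ifP.
have KD_affine0 :
    (K *m restr_mx D <= affine_mx D :&: kermx (restr_mx (D :&: U)))%MS.
  rewrite sub_capmx; apply/andP; split.
    by apply: submx_trans WD; apply: submxMr; exact: capmxSl.
  rewrite sub_kermx -mulmxA restr_mxM setIA setIid setIC -restr_mxM.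
  by rewrite mulmxA KU0 mul0mx.
have rank_affine := mxrank_mul_ker (affine_mx D) (restr_mx (D :&: U)).
rewrite affine_mx_restr setIA setIid in rank_affine.
have rank_K : (\rank (K :&: kermx (restr_mx (U :|: D))) <=
               \rank (W :&: kermx (restr_mx (U :|: D))))%N.
  by apply/mxrankS/capmxS; [exact: capmxSl | exact: submx_refl].
have := mxrank_mul_ker W (restr_mx (U :|: D)).
have := mxrank_mul_ker W (restr_mx U); rewrite -/K.
have := mxrank_mul_ker K (restr_mx (U :|: D)); rewrite KUD.
have := mxrankS KD_affine0; have := rank_leq_row (affine_mx D).
move: rank_affine rank_K; clearbody K.
(* lia compares atoms syntactically; [set] identifies the copies of each rank
   elaborated with different (convertible) ring instances. *)
set rKD := \rank (K *m restr_mx D); set rAker := \rank (affine_mx D :&: _).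
set rWker := \rank (W :&: _); set rKker := \rank (K :&: _).
set rA := \rank (affine_mx D); set rAU := \rank (affine_mx (D :&: U)).
set rWUD := \rank (W *m restr_mx (U :|: D)); set rWU := \rank (W *m restr_mx U).
lia.
Qed.

Lemma rank_le_restr_add m (W : 'M[R]_(m, N)) U V :
  W *m restr_mx (~: V) = 0 ->
  (\rank W <= \rank (W *m restr_mx U) + #|V :\: U|)%N.
Proof.
move=> WV0.
set K := (W :&: kermx (restr_mx U))%MS.
have KU0 : K *m restr_mx U = 0 by apply/eqP; rewrite -sub_kermx capmxSr.
have KV0 : K *m restr_mx (~: V) = 0.
  apply/eqP; rewrite -submx0; apply: submx_trans (submxMr _ (capmxSl _ _)) _.
  by rewrite WV0 sub0mx.
have KVU : K = K *m restr_mx (V :\: U).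
  rewrite mulmx_restr; apply/matrixP=> i j; rewrite mxE.
  move/matrixP: KU0 => /(_ i j); move/matrixP: KV0 => /(_ i j).
  rewrite !mulmx_restr !mxE !inE.
  by case: (j \in U); case: (j \in V) => //= ->.
have rank_K : (\rank K <= #|V :\: U|)%N.
  by rewrite KVU; apply: leq_trans (mxrankM_maxr _ _) (rank_restr_mx _).
have := mxrank_mul_ker W (restr_mx U); rewrite -/K.
by set rWU := \rank (W *m _); lia.
Qed.

Definition prefix_cells (s : seq {set 'I_N}) (i : nat) : {set 'I_N} :=
  \bigcup_(j < i) nth set0 s j.

Definition defect (s : seq {set 'I_N}) (i : nat) : int :=
  #|nth set0 s i :\: prefix_cells s i|%:Z - n%:Z
  + dimconv R pts (nth set0 s i :&: prefix_cells s i).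

Lemma rank_restr_prefix_cells m (W : 'M[R]_(m, N)) s :
  (forall D, D \in s -> (W *m restr_mx D <= affine_mx D)%MS) ->
  forall k, ((\rank (W *m restr_mx (prefix_cells s k)))%:Z
             + \sum_(i < k) defect s i <= #|prefix_cells s k|%:Z)%R.
Proof.
move=> Ws; elim=> [|k IH].
  by rewrite /prefix_cells !big_ord0 mulmx_restr0 mxrank0 cards0.
set U := prefix_cells s k; set D := nth set0 s k.
have WD : (W *m restr_mx D <= affine_mx D)%MS.
  case: (ltnP k (size s)) => [/(mem_nth set0)/Ws //|ge_size].
  by rewrite /D nth_default // mulmx_restr0 sub0mx.
have step := rank_restr_setU U WD.
have dim_overlap := dimconv_lt_rank_affine (D :&: U).
have card_U : #|U :|: D| = (#|U| + #|D :\: U|)%N.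
  by rewrite -(cardsID U (U :|: D)) setUK setDUl setDv set0U.
rewrite /prefix_cells big_ord_recr /= -/(prefix_cells s k) -/U -/D.
rewrite card_U big_ord_recr /= /defect -/U -/D.
move: IH step dim_overlap; rewrite -/U.
set S := \sum_(i < k) _; set e := dimconv _ _ _.
set rWUD := \rank (W *m restr_mx (U :|: D)); set rWU := \rank (W *m restr_mx U).
set rAU := \rank (affine_mx (D :&: U)).
set cU := #|U|; set cD := #|D :\: U|.
lia.
Qed.

Lemma affine_on_subdiv_cell c (c' : 'rV[R]_N) D :
  same_subdiv pts c c' -> D \in subdiv pts setT c ->
  (c' *m restr_mx D <= affine_mx D)%MS.
Proof.
case=> _ <- /imsetP[S]; rewrite inE => /pboolP[x argmaxS] ->{D}.
set D := vtxset R pts S.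
have DS : D \subset S by apply/subsetP => i; rewrite inE => /andP[].
case: (pickP (mem D)) => [j0 Dj0|D0]; last first.
  rewrite (_ : c' *m restr_mx D = 0) ?sub0mx //.
  by rewrite mulmx_restr; apply/matrixP => i j; rewrite !mxE; move: (D0 j) => /= ->.
set M := monval pts (fun i => c' 0 i) j0 x.
(* On a cell all monomials attain the same maximum M at x. *)
have c'_affine j : j \in D -> c' 0 j = M - (toR R (pts j) *m x^T) 0 0.
  move=> Dj; have Sj := subsetP DS j Dj; have Sj0 := subsetP DS j0 Dj0.
  rewrite -argmaxS !inE in Sj Sj0.
  case/andP: Sj => Pj /forall_inP maxj; case/andP: Sj0 => Pj0 /forall_inP maxj0.
  have : monval pts (fun i => c' 0 i) j x = M.
    by apply/eqP; rewrite eq_le maxj0 ?maxj.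
  by rewrite /monval => <-; ring.
apply/submxP; exists (row_mx (- x) M%:M).
rewrite mul_row_col; apply/matrixP=> i j; rewrite mulmx_restr !mxE (ord1 i).
case: (boolP (j \in D)) => Dj.
  rewrite c'_affine // !mxE big_ord1 !mxE /= Dj mulr1n mulr1 addrC -sumrN.
  by congr (_ + _); apply: eq_bigr => k _; rewrite !mxE Dj mulNr mulrC.
rewrite big_ord1 !mxE (negbTE Dj) mulr0 addr0 big1 // => k _.
by rewrite !mxE (negbTE Dj) mulr0.
Qed.

Lemma rank_atleast_le_subdiv_cells (c : 'I_N -> R) (s : seq {set 'I_N}) d :
  {subset s <= subdiv pts setT c} ->
  rank_atleast pts c d -> (d%:Z <= rhs_bound pts c s)%R.
Proof.
move=> s_cells [cs [cs_subdiv rankW]].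
move: rankW; set Dm := \matrix_(k < d, j < N) _; set W := col_mx _ Dm.
set V := vertS pts c => rankW.
have cell_V D : D \in subdiv pts setT c -> D \subset V by apply: bigcup_sup.
have WV0 : W *m restr_mx (~: V) = 0.
  rewrite /W mul_col_mx !mulmx_restr -col_mx0; congr col_mx; apply/matrixP => i j;
  rewrite !mxE inE; case: (boolP (j \in V)) => //= nVj.
  by rewrite !(cs_subdiv _).1 // subrr.
have W_affine D : D \in s -> (W *m restr_mx D <= affine_mx D)%MS.
  move=> /s_cells sD; rewrite /W mul_col_mx col_mx_sub; apply/andP; split.
    apply/submxP; exists (row_mx 0 1%:M).
    rewrite mul_row_col mul0mx add0r mul1mx mulmx_restr.
    apply/matrixP=> i j; rewrite !mxE.
    by case: (boolP (j \in D)) => // /(subsetP (cell_V D sD)) ->.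
  apply/row_subP => k; rewrite row_mul.
  have -> : row k Dm = cs (lift ord0 k) - cs ord0 by apply/rowP => j; rewrite !mxE.
  by rewrite mulmxBl addmx_sub ?eqmx_opp ?(affine_on_subdiv_cell (cs_subdiv _) sD).
set U := prefix_cells s (size s).
have UV : U \subset V.
  apply/bigcupsP => i _; case: (ltnP i (size s)) => [lt_i_s|/(nth_default set0) ->].
    exact/cell_V/s_cells/mem_nth.
  exact: sub0set.
have rhsE : rhs_bound pts c s = #|V|%:Z - 1 - \sum_(i < size s) defect s i by [].
have := rank_restr_prefix_cells W_affine (size s); rewrite -/U.
have := rank_le_restr_add U WV0; rewrite rankW cardsD (setIidPr UV).
have := subset_leq_card UV; rewrite rhsE.
set S := \sum_(i < size s) _; set rWU := \rank (W *m _).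
set cU := #|U|; set cV := #|V|.
lia.
Qed.

End RestrictionRank.

Theorem mainTheorem8 (R : realFieldType) (n N : nat)
  (pts : 'I_N -> 'rV[int]_n) (c : 'I_N -> R) :
  (3 < n)%N -> (0 < N)%N -> injective pts ->
  forall s : seq {set 'I_N},
    uniq s -> (forall D, D \in s <-> D \in nonsimplex_cells pts c) ->
  forall d : nat, rank_atleast pts c d ->
    (d%:Z <= rhs_bound pts c s)%R.
Proof.
move=> _ _ _ s _ s_nonsimplex d; apply: rank_atleast_le_subdiv_cells => D.
by move/s_nonsimplex; rewrite inE => /andP[].
Qed.
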